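(* Let $p>\alpha+2>0$, assume $6p^2-11p+4\ge0$ and $p\neq\tfrac13$, and suppose $$\frac{6p^3-29p^2+17p-2-2p\sqrt{6p^2-11p+4}}{(3p-1)^2}\le\alpha\le\frac{6p^3-29p^2+17p-2+2p\sqrt{6p^2-11p+4}}{(3p-1)^2}.$$ Then $F_{p,\alpha}(r)\le 0$ for all $r\in(0,1]$, where $$F_{p,\alpha}(r)=r^{\,p-4-\frac{3\alpha}{2}}\int_0^{\frac{2r}{1+r}}\frac{t^{\frac{\alpha+2}{p}-1}}{(1-t)^{\frac{\alpha+2}{p}}}\,dt-\int_0^1\frac{t^{\frac{\alpha+2}{p}-1}}{(1-t)^{\frac{\alpha+2}{p}}}\,dt .$$
   Context: For $p>\alpha+2>0$ the integral $\int_0^1 t^{\frac{\alpha+2}{p}-1}(1-t)^{-\frac{\alpha+2}{p}}\,dt$ equals $B\!\left(\frac{\alpha+2}{p},1-\frac{\alpha+2}{p}\right)=\pi/\sin\frac{(\alpha+2)\pi}{p}$, so $F_{p,\alpha}$ is well defined on $(0,1]$. *)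

From HB Require Import structures.
From mathcomp Require Import all_boot all_order all_algebra.
From mathcomp Require Import all_classical all_reals all_analysis.
Set Implicit Arguments. Unset Strict Implicit. Unset Printing Implicit Defensive.
Import Order.TTheory GRing.Theory Num.Theory.
Local Open Scope classical_set_scope.
Local Open Scope ring_scope.

Definition integrand {R : realType} (p alpha : R) (t : R) : R :=
  t `^ ((alpha + 2) / p - 1) / (1 - t) `^ ((alpha + 2) / p).

(* \int_0^x integrand dt  (Lebesgue integral over ]0, x[, possibly improper
   in the Riemann sense; the integrand is nonnegative and integrable here) *)
Definition Iint {R : realType} (p alpha x : R) : R :=
  Rintegral (@lebesgue_measure R) `]0, x[ (integrand p alpha).

Definition F {R : realType} (p alpha r : R) : R :=
  r `^ (p - 4 - 3 * alpha / 2) * Iint p alpha (2 * r / (1 + r))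
  - Iint p alpha 1.

From HB Require Import structures.
From mathcomp Require Import all_boot all_order all_algebra.
From mathcomp Require Import all_classical all_reals all_analysis.
From mathcomp Require Import measurable_realfun lra ring.
Import Order.TTheory GRing.Theory Num.Theory.
Import numFieldNormedType.Exports.
Local Open Scope classical_set_scope.
Local Open Scope ring_scope.
Set Implicit Arguments. Unset Strict Implicit. Unset Printing Implicit Defensive.

(* Put a := (alpha + 2) / p, k := p - 4 - 3 alpha / 2 and f t := t^(a-1) (1-t)^(-a),
   so that the claim reads r^k \int_0^(2r/(1+r)) f <= \int_0^1 f. The change of
   variables phi_r t := 2t / (2r + (1-r)t) maps ]0, 2r/(1+r)[ increasingly onto ]0, 1[,
   so it suffices to prove r^k f t <= f (phi_r t) phi_r' t pointwise. Writing
   t = 2v/(1+v) gives phi_r t = 2u/(1+u) with u = v/r >= v, and the logarithm of the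
   pointwise inequality becomes L u <= L v for
   L w := -(k+a) ln w + a ln (1-w) + ln (1+w).
   Now L' w = - q w / (w (1-w) (1+w)) with q w := (k+a) + (a-1) w + (1-k) w^2, and the
   bounds on alpha say exactly that the discriminant of q is nonpositive. *)

Lemma quadratic_ge0 (R : realFieldType) (A B C w : R) :
  0 < A -> B ^+ 2 <= 4 * A * C -> 0 <= C + B * w + A * w ^+ 2.
Proof.
move=> A0 disc.
have : 0 <= (2 * A * w + B) ^+ 2 by rewrite sqr_ge0.
nra.
Qed.

Lemma discriminant_lead_gt0 (R : realFieldType) (a k : R) :
  0 < a -> a != 1 -> (a - 1) ^+ 2 <= 4 * (1 - k) * (k + a) -> 0 < 1 - k.
Proof.
move=> a0 a1 disc; rewrite ltNge; apply/negP => k1.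
have : 0 < (a - 1) ^+ 2 by rewrite exprn_even_gt0 //= subr_eq0.
nra.
Qed.

Lemma alpha_bounds_discriminant (R : rcfType) (p alpha : R) :
  0 < p -> p != 3^-1 -> 0 <= 6 * p ^+ 2 - 11 * p + 4 ->
  (6 * p ^+ 3 - 29 * p ^+ 2 + 17 * p - 2
     - 2 * p * Num.sqrt (6 * p ^+ 2 - 11 * p + 4)) / (3 * p - 1) ^+ 2 <= alpha ->
  alpha <= (6 * p ^+ 3 - 29 * p ^+ 2 + 17 * p - 2
     + 2 * p * Num.sqrt (6 * p ^+ 2 - 11 * p + 4)) / (3 * p - 1) ^+ 2 ->
  ((alpha + 2) / p - 1) ^+ 2
    <= 4 * (1 - (p - 4 - 3 * alpha / 2)) * (p - 4 - 3 * alpha / 2 + (alpha + 2) / p).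
Proof.
move=> p0 p3 D0 hlo hhi.
set a := (alpha + 2) / p; set k := p - 4 - 3 * alpha / 2.
set D := 6 * p ^+ 2 - 11 * p + 4 in D0 hlo hhi.
set c := 6 * p ^+ 3 - 29 * p ^+ 2 + 17 * p - 2 in hlo hhi.
set s := Num.sqrt D in hlo hhi.
set m := (3 * p - 1) ^+ 2 in hlo hhi.
have m0 : 0 < m.
  by rewrite exprn_even_gt0 //= subr_eq0; apply: contra p3 => /eqP h; apply/eqP; lra.
rewrite ler_pdivrMr // in hlo; rewrite ler_pdivlMr // in hhi.
have s2 : s ^+ 2 = D by rewrite sqr_sqrtr.
have key : m * p ^+ 2 * (4 * (1 - k) * (k + a) - (a - 1) ^+ 2)
    = 4 * p ^+ 2 * D - (m * alpha - c) ^+ 2.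
  by rewrite /a /k /m /c /D; field; rewrite gt_eqF.
have : 0 <= 4 * p ^+ 2 * D - (m * alpha - c) ^+ 2.
  have -> : 4 * p ^+ 2 * D - (m * alpha - c) ^+ 2
      = (2 * p * s - (m * alpha - c)) * (2 * p * s + (m * alpha - c)).
    by rewrite -s2; ring.
  by apply: mulr_ge0; lra.
by rewrite -key pmulr_rge0 ?subr_ge0 // mulr_gt0 // exprn_gt0.
Qed.

Lemma is_derive1_continuous (R : realType) (f : R -> R) (x df : R) :
  is_derive x 1 f df -> {for x, continuous f}.
Proof. by case=> /derivable1_diffP/differentiable_continuous. Qed.

Lemma is_derive_subl (R : realType) (c x : R) : is_derive x 1 (fun y : R => c - y) (-1).
Proof.
have h : is_derive x 1 (cst c - id) (0 - 1) by exact: is_deriveB.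
by rewrite sub0r in h.
Qed.

Lemma is_derive_addl (R : realType) (c x : R) : is_derive x 1 (fun y : R => c + y) 1.
Proof.
have h : is_derive x 1 (cst c + id) (0 + 1) by exact: is_deriveD.
by rewrite add0r in h.
Qed.

Lemma is_derive_powR_subl (R : realType) (b t : R) : t < 1 ->
  is_derive t 1 (fun x => (1 - x) `^ b) (- (b * (1 - t) `^ (b - 1))).
Proof.
move=> t1.
have dpow : is_derive (1 - t) 1 ((@powR R)^~ b) (b * (1 - t) `^ (b - 1)).
  by apply: is_derive1_powR; lra.
have := @is_derive1_comp R _ (fun x => 1 - x) t _ _ dpow (is_derive_subl 1 t).
by rewrite mulrN1.
Qed.

Section ln_weight.
Variables (R : realType) (a k : R).

Definition ln_weight (w : R) : R := - (k + a) * ln w + a * ln (1 - w) + ln (1 + w).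

Lemma is_derive_ln_weight (w : R) : 0 < w < 1 ->
  is_derive w 1 ln_weight
    (- ((k + a) + (a - 1) * w + (1 - k) * w ^+ 2) / (w * (1 - w) * (1 + w))).
Proof.
move=> /andP[w0 w1].
have dln : is_derive w 1 (@ln R) w^-1 by exact: is_derive1_ln.
have dln1m : is_derive w 1 (fun x => ln (1 - x)) ((1 - w)^-1 * -1).
  apply: (@is_derive1_comp R (@ln R) (fun x => 1 - x)); last exact: is_derive_subl.
  by apply: is_derive1_ln; lra.
have dln1p : is_derive w 1 (fun x => ln (1 + x)) ((1 + w)^-1 * 1).
  apply: (@is_derive1_comp R (@ln R) (fun x => 1 + x)); last exact: is_derive_addl.
  by apply: is_derive1_ln; lra.
have -> : - ((k + a) + (a - 1) * w + (1 - k) * w ^+ 2) / (w * (1 - w) * (1 + w))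
    = - (k + a) * w^-1 + a * ((1 - w)^-1 * -1) + (1 + w)^-1 * 1.
  by field; repeat (apply/andP; split); apply: lt0r_neq0; lra.
exact: is_deriveD.
Qed.

Hypothesis q_ge0 :
  forall w : R, 0 < w < 1 -> 0 <= (k + a) + (a - 1) * w + (1 - k) * w ^+ 2.

Lemma ln_weight_nonincreasing : {in `]0, 1[ &, {homo ln_weight : v u /~ v <= u}}.
Proof.
apply: ler0_derive1_le_oo.
- by move=> w /[!in_itv] /= /is_derive_ln_weight [].
- move=> w /[!in_itv] /= w01; have := is_derive_ln_weight w01 => d.
  have /andP[w0 w1] := w01.
  rewrite derive1E derive_val mulNr oppr_le0 divr_ge0 ?q_ge0 //.
  by rewrite !mulr_ge0 //; lra.
- move=> w; rewrite inE /= in_itv /=.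
  by move=> /is_derive_ln_weight /is_derive1_continuous.
Qed.

End ln_weight.

Definition beta_kernel {R : realType} (a t : R) : R := t `^ (a - 1) / (1 - t) `^ a.

Section beta_kernel.
Variables (R : realType) (a : R).

Lemma beta_kernel_gt0 (t : R) : 0 < t < 1 -> 0 < beta_kernel a t.
Proof. by move=> /andP[t0 t1]; rewrite divr_gt0 // powR_gt0 //; lra. Qed.

Lemma ln_beta_kernel (t : R) : 0 < t < 1 ->
  ln (beta_kernel a t) = (a - 1) * ln t - a * ln (1 - t).
Proof.
move=> /andP[t0 t1].
by rewrite ln_div ?posrE ?powR_gt0 ?ln_powR //; lra.
Qed.

Lemma ln_beta_kernel_mobius (w : R) : 0 < w < 1 ->
  ln (beta_kernel a (2 * w / (1 + w)))
    = (a - 1) * ln 2 + (a - 1) * ln w - a * ln (1 - w) + ln (1 + w).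
Proof.
move=> /andP[w0 w1].
have w1p : 0 < 1 + w by lra.
have w1m : 0 < 1 - w by lra.
rewrite ln_beta_kernel; last by rewrite divr_gt0 ?mulr_gt0 // ltr_pdivrMr //; lra.
have -> : 1 - 2 * w / (1 + w) = (1 - w) / (1 + w) by field; lra.
rewrite !ln_div ?posrE ?mulr_gt0 // lnM ?posrE //; ring.
Qed.

Lemma derivable_beta_kernel (t : R) : 0 < t < 1 -> derivable (beta_kernel a) t 1.
Proof.
move=> /andP[t0 t1].
have dnum := is_derive1_powR (a - 1) t0.
have dden := is_derive_powR_subl a t1.
have den0 : (1 - t) `^ a != 0 by rewrite gt_eqF // powR_gt0 //; lra.
have ddeninv := @is_deriveV R (fun x => (1 - x) `^ a) t _ 1 den0 dden.
by case: (is_deriveM dnum ddeninv).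
Qed.

Lemma continuous_beta_kernel : {in `]0, 1[, continuous (beta_kernel a)}.
Proof.
move=> t; rewrite in_itv /= => /derivable_beta_kernel.
by move=> /derivable1_diffP/differentiable_continuous.
Qed.

End beta_kernel.

Section phi.
Variables (R : realType) (r : R).

Definition phi (t : R) : R := 2 * t / (2 * r + (1 - r) * t).
Definition dphi (t : R) : R := 4 * r / (2 * r + (1 - r) * t) ^+ 2.

Lemma is_derive_phi (t : R) : 0 < 2 * r + (1 - r) * t -> is_derive t 1 phi (dphi t).
Proof.
move=> D0.
have dD : is_derive t 1 (fun x : R => 2 * r + (1 - r) * x) (0 + (1 - r) * 1).
  exact: is_deriveD (is_derive_cst (2 * r) t 1) (is_deriveZ (1 - r) (is_derive_id t 1)).
have dDinv := @is_deriveV R (fun x : R => 2 * r + (1 - r) * x) t _ 1 (lt0r_neq0 D0) dD.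
have := is_deriveM (is_deriveZ 2 (is_derive_id t 1)) dDinv.
have -> // : (2 * t) *: (- (2 * r + (1 - r) * t) ^- 2 *: (0 + (1 - r) * 1))
    + (2 * r + (1 - r) * t)^-1 *: (2 * 1) = dphi t.
by rewrite /dphi /GRing.scale /=; field; exact: lt0r_neq0.
Qed.

Lemma derive1_phi (t : R) : 0 < 2 * r + (1 - r) * t -> (phi^`())%classic t = dphi t.
Proof. by move=> /is_derive_phi d; rewrite derive1E derive_val. Qed.

Lemma continuous_dphi (t : R) : 0 < 2 * r + (1 - r) * t -> {for t, continuous dphi}.
Proof.
move=> D0.
have dD : is_derive t 1 (fun x : R => 2 * r + (1 - r) * x) (0 + (1 - r) * 1).
  exact: is_deriveD (is_derive_cst (2 * r) t 1) (is_deriveZ (1 - r) (is_derive_id t 1)).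
have D20 : (2 * r + (1 - r) * t) ^+ 2 != 0 by rewrite expf_neq0 // lt0r_neq0.
have dD2inv := @is_deriveV R (fun x => (2 * r + (1 - r) * x) ^+ 2) t _ 1 D20 (is_deriveX 2 dD).
exact: is_derive1_continuous (is_deriveZ (4 * r) dD2inv).
Qed.

Hypothesis r01 : 0 < r <= 1.

Lemma phi_denom_gt0 (t : R) : 0 < t -> 0 < 2 * r + (1 - r) * t.
Proof. by have /andP[r0 r1] := r01; nra. Qed.

Lemma continuous_derive1_phi (t : R) : 0 < t -> {for t, continuous (phi^`())%classic}.
Proof.
move=> t0; rewrite /prop_for /continuous_at derive1_phi ?phi_denom_gt0 //.
apply: cvg_trans (continuous_dphi (phi_denom_gt0 t0)).
apply: near_eq_cvg; near=> y.
rewrite derive1_phi // phi_denom_gt0 //.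
by near: y; exact: lt_nbhsr.
Unshelve. all: end_near.
Qed.

Lemma phi_itv (t : R) : 0 < t -> t * (1 + r) < 2 * r -> 0 < phi t < 1.
Proof.
move=> t0 tr; have D0 := phi_denom_gt0 t0; have /andP[r0 r1] := r01.
rewrite divr_gt0 ?mulr_gt0 //= ltr_pdivrMr // mul1r; nra.
Qed.

Lemma phi_increasing (t s : R) : 0 < t -> t < s -> phi t < phi s.
Proof.
move=> t0 ts; have Dt := phi_denom_gt0 t0.
have Ds := phi_denom_gt0 (lt_trans t0 ts); have /andP[r0 r1] := r01.
rewrite /phi ltr_pdivrMr // mulrAC ltr_pdivlMr //; nra.
Qed.

End phi.

Lemma beta_kernel_le_phi (R : realType) (a k r t : R) :
  (forall w, 0 < w < 1 -> 0 <= (k + a) + (a - 1) * w + (1 - k) * w ^+ 2) ->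
  0 < r <= 1 -> 0 < t -> t * (1 + r) < 2 * r ->
  r `^ k * beta_kernel a t <= beta_kernel a (phi r t) * dphi r t.
Proof.
move=> q_ge0 r01 t0 tr; have /andP[r0 r1] := r01.
have t1 : t < 1 by nra.
have D0 := phi_denom_gt0 r01 t0.
set v := t / (2 - t); set u := v / r.
have v0 : 0 < v by rewrite divr_gt0 //; lra.
have vr : v < r by rewrite ltr_pdivrMr; [nra | lra].
have u0 : 0 < u by rewrite divr_gt0.
have u1 : u < 1 by rewrite ltr_pdivrMr // mul1r.
have vu : v <= u by rewrite ler_pdivlMr // ler_piMr // ltW.
have v1 : v < 1 by lra.
have ht : t = 2 * v / (1 + v) by rewrite /v; field; rewrite !gt_eqF //; lra.
have hr : r = v / u by rewrite /u; field; rewrite !gt_eqF.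
have hD : 2 * r + (1 - r) * t = 2 * r * (1 + u) / (1 + v).
  by rewrite /u /v; field; rewrite !gt_eqF //; lra.
clearbody u v.
have hphi : phi r t = 2 * u / (1 + u).
  by rewrite /phi hD {1}ht hr; field; rewrite !gt_eqF //; lra.
have hdphi : dphi r t = (1 + v) ^+ 2 / (r * (1 + u) ^+ 2).
  by rewrite /dphi hD; field; rewrite !gt_eqF //; lra.
have u1p : 0 < 1 + u by lra.
have v1p : 0 < 1 + v by lra.
have dphi0 : 0 < dphi r t by rewrite divr_gt0 ?exprn_gt0 ?mulr_gt0.
have /andP[phi0 phi1] := phi_itv r01 t0 tr.
have kt0 : 0 < beta_kernel a t by rewrite beta_kernel_gt0 ?t0.
have kphi0 : 0 < beta_kernel a (phi r t) by rewrite beta_kernel_gt0 ?phi0.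
have lhs0 : 0 < r `^ k * beta_kernel a t by rewrite mulr_gt0 ?powR_gt0.
have rhs0 : 0 < beta_kernel a (phi r t) * dphi r t by rewrite mulr_gt0.
rewrite -ler_ln ?posrE //.
rewrite (lnM (x := r `^ k)) ?posrE ?powR_gt0 // ln_powR hdphi.
rewrite (lnM (x := beta_kernel a (phi r t))) ?posrE //; last by rewrite -hdphi.
rewrite ln_div ?posrE ?exprn_gt0 ?mulr_gt0 // lnM ?posrE ?exprn_gt0 // !lnXn //.
rewrite hphi {1}ht !ln_beta_kernel_mobius ?u0 ?v0 // hr ln_div ?posrE //.
rewrite -subr_ge0 (_ : _ - _ = ln_weight a k v - ln_weight a k u); last first.
  by rewrite /ln_weight; ring.
by rewrite subr_ge0 ln_weight_nonincreasing // in_itv /= ?u0 ?v0 ?u1 ?v1.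
Qed.

Section integral_oo.
Variable R : realType.
Local Notation mu := (@lebesgue_measure R).

Lemma continuous_oo_measurable_fun (g : R -> R) (A B : R) :
  {in `]A, B[, continuous g} -> measurable_fun `]A, B[ g.
Proof.
move=> cg; apply: open_continuous_measurable_fun => // x.
by rewrite inE /=; exact: cg.
Qed.

Lemma continuous_oo_measurable_fun_cc (g : R -> R) (A B al be : R) :
  {in `]A, B[, continuous g} -> A < al -> be < B ->
  measurable_fun `[al, be] (EFin \o g).
Proof.
move=> /continuous_oo_measurable_fun mg Aal beB.
apply/measurable_EFinP; apply: measurable_funS mg => // x /=.
by rewrite !in_itv /= => /andP[? ?]; apply/andP; split; lra.
Qed.

Lemma bigcup_itv_cc_shrink (A B : R) (e : nat -> R) :
  (forall n, 0 < e n) -> (forall m, 0 < m -> exists n, e n < m) ->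
  \bigcup_n `[A + e n, B - e n]%classic = `]A, B[%classic.
Proof.
move=> e0 e_small; apply/seteqP; split.
  move=> x [n _] /=; rewrite !in_itv /= => /andP[? ?].
  by have := e0 n; move=> ?; apply/andP; split; lra.
move=> x /= /[!in_itv] /= /andP[Ax xB].
have m0 : 0 < Num.min (x - A) (B - x) by rewrite lt_min; apply/andP; split; lra.
have [n] := e_small _ m0; rewrite lt_min => /andP[? ?].
by exists n => //=; rewrite in_itv /=; apply/andP; split; lra.
Qed.

Lemma ge0_integral_oo_le (g : R -> R) (A B : R) (M : \bar R) :
  A < B -> {in `]A, B[, continuous g} -> (forall x, A < x < B -> 0 <= g x) ->
  (forall al be, A < al -> al < be -> be < B ->
     (\int[mu]_(x in `[al, be]) (g x)%:E <= M)%E) ->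
  (\int[mu]_(x in `]A, B[) (g x)%:E <= M)%E.
Proof.
move=> AB cg g0 hb.
pose d := B - A; have d0 : 0 < d by rewrite subr_gt0.
pose e (n : nat) : R := d / (n + 3)%:R.
have n3 n : (3 : R) <= (n + 3)%:R by rewrite (ler_nat R 3) leq_addl.
have e0 n : 0 < e n by rewrite divr_gt0 //; have := n3 n; lra.
have e2 n : e n * 2 < d.
  by rewrite mulrAC ltr_pdivrMr; have := n3 n; [nra | lra].
have e_small m : 0 < m -> exists n, e n < m.
  move=> m0; exists (Num.truncn (d / m)).
  rewrite /e ltr_pdivrMr ?ltr0n ?addn3 // mulrC -ltr_pdivrMr //.
  have /andP[_ /lt_le_trans -> //] := truncn_itv (ltW (divr_gt0 d0 m0)).
  by rewrite ler_nat (leq_trans (leqnSn _) (leqnSn _)).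
pose S n := `[A + e n, B - e n]%classic.
have US : \bigcup_n S n = `]A, B[%classic by exact: bigcup_itv_cc_shrink.
have SAB n : S n `<=` `]A, B[%classic by rewrite -US; exact: bigcup_sup.
have S_nondecr : nondecreasing_seq S.
  apply/nondecreasing_seqP => n; rewrite subsetEset => x.
  rewrite /S /= !in_itv /= => /andP[? ?].
  have : e n.+1 <= e n.
    by rewrite ler_pM2l // lef_pV2 ?posrE ?ler_nat ?leq_add2r //; have := n3 n; lra.
  by move=> ?; apply/andP; split; lra.
have mg : measurable_fun `]A, B[%classic (EFin \o g).
  by apply/measurable_EFinP; exact: continuous_oo_measurable_fun.
have cv := @ge0_nondecreasing_set_cvg_integral _ (measurableTypeR R) R S (EFin \o g) mu
  S_nondecr (fun i => measurable_itv _)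
  (fun i => measurable_funS (measurable_itv _) (SAB i) mg) (fun i x Sx => g0 x (SAB i x Sx)).
rewrite -US -(cvg_lim _ cv) //.
apply: lime_le; first by apply/cvg_ex; eexists; exact: cv.
apply: nearW => n /=.
by apply: hb; have := e0 n; have := e2 n; rewrite /d; lra.
Qed.

End integral_oo.

Lemma powR_le1 (R : realType) (x e : R) : 0 <= x <= 1 -> 0 <= e -> x `^ e <= 1.
Proof.
move=> /andP[x0 x1] e0.
by have := @ge0_ler_powR R e e0 x 1; rewrite powR1 => -> //; rewrite nnegrE.
Qed.

(* Finiteness of \int_0^1 f is essential: [Rintegral] is [fine] of the integral,
   hence 0 if the integral is infinite. *)
Section beta_kernel_integrable.
Variables (R : realType) (a : R).
Hypothesis a01 : 0 < a < 1.
Local Notation mu := (@lebesgue_measure R).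

Definition beta_majorant (t : R) : R := 2 * t `^ (a - 1) + 2 * (1 - t) `^ (- a).

Definition beta_majorant_primitive (t : R) : R :=
  (2 / a) * t `^ a - (2 / (1 - a)) * (1 - t) `^ (1 - a).

Lemma is_derive_beta_majorant_primitive (t : R) : 0 < t < 1 ->
  is_derive t 1 beta_majorant_primitive (beta_majorant t).
Proof.
move=> /andP[t0 t1]; have /andP[a0 a1] := a01.
have := is_deriveB (is_deriveZ (2 / a) (is_derive1_powR a t0))
  (is_deriveZ (2 / (1 - a)) (is_derive_powR_subl (1 - a) t1)).
have -> // : (2 / a) *: (a * t `^ (a - 1))
    - (2 / (1 - a)) *: - ((1 - a) * (1 - t) `^ (1 - a - 1)) = beta_majorant t.
rewrite /beta_majorant /GRing.scale /= (_ : 1 - a - 1 = - a); last by ring.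
by field; rewrite !gt_eqF //; lra.
Qed.

Lemma continuous_beta_majorant : {in `]0, 1[, continuous beta_majorant}.
Proof.
move=> t; rewrite in_itv /= => /andP[t0 t1].
have := is_deriveD (is_deriveZ 2 (is_derive1_powR (a - 1) t0))
  (is_deriveZ 2 (is_derive_powR_subl (- a) t1)).
exact: is_derive1_continuous.
Qed.

Lemma beta_kernel_le_majorant (t : R) : 0 < t < 1 -> beta_kernel a t <= beta_majorant t.
Proof.
move=> /andP[t0 t1]; have /andP[a0 a1] := a01.
rewrite /beta_kernel /beta_majorant powRN.
have p1 : 0 < t `^ (a - 1) by rewrite powR_gt0.
have p2 : 0 < (1 - t) `^ a by rewrite powR_gt0 //; lra.
set z := ((1 - t) `^ a)^-1.
have z0 : 0 < z by rewrite invr_gt0.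
have yz : (1 - t) `^ a * z = 1 by rewrite mulfV // gt_eqF.
have [th|th] := leP t 2^-1.
- have : 2^-1 <= (1 - t) `^ a.
    apply: (@le_trans _ _ (2^-1 `^ a)).
      by apply: ger1_powR; [apply/andP; split; lra | lra].
    by apply: ge0_ler_powR; rewrite ?nnegrE; lra.
  move=> ?; have : z <= 2 by nra.
  nra.
- have ta : t `^ a <= 1 by apply: powR_le1; [apply/andP; split | ]; lra.
  have ti : t * t^-1 = 1 by rewrite mulfV // gt_eqF.
  have ta2 : t `^ (a - 1) <= 2.
    rewrite powRB ?powRr1 ?(ltW t0) ?(gt_eqF t0) ?implybT //.
    have : 0 <= t `^ a by exact: powR_ge0.
    have : 0 < t^-1 by rewrite invr_gt0.
    nra.
  nra.
Qed.

Lemma integral_beta_majorant_le (al be : R) : 0 < al -> al < be -> be < 1 ->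
  (\int[mu]_(x in `[al, be]) (beta_majorant x)%:E <= (2 / a + 2 / (1 - a))%:E)%E.
Proof.
move=> al0 albe be1; have /andP[a0 a1] := a01.
have dP (x : R) : al <= x <= be ->
    is_derive x 1 beta_majorant_primitive (beta_majorant x).
  by move=> /andP[? ?]; apply: is_derive_beta_majorant_primitive; apply/andP; split; lra.
rewrite (continuous_FTC2 (F := beta_majorant_primitive)) //.
- rewrite -EFinB lee_fin /beta_majorant_primitive.
  have : be `^ a <= 1 by apply: powR_le1; [apply/andP; split | ]; lra.
  have : (1 - al) `^ (1 - a) <= 1 by apply: powR_le1; [apply/andP; split | ]; lra.
  have : 0 <= (1 - be) `^ (1 - a) := powR_ge0 _ _.
  have : 0 <= al `^ a := powR_ge0 _ _.
  have : 0 < 2 / a by rewrite divr_gt0.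
  have : 0 < 2 / (1 - a) by rewrite divr_gt0 //; lra.
  nra.
- apply: continuous_in_subspaceT => x /[!inE] /= /[!in_itv] /= /andP[? ?].
  by apply: continuous_beta_majorant; rewrite in_itv /=; apply/andP; split; lra.
- split.
  + by move=> x /[!in_itv] /= /andP[? ?]; case: (dP x) => //; apply/andP; split; lra.
  + apply/cvg_at_right_filter/is_derive1_continuous/(dP al).
    by rewrite lexx ltW.
  + apply/cvg_at_left_filter/is_derive1_continuous/(dP be).
    by rewrite lexx ltW.
- move=> x /[!in_itv] /= /andP[? ?].
  have := dP x; rewrite !ltW // => /(_ isT) d.
  by rewrite derive1E derive_val.
Qed.

Lemma integral_beta_kernel_le :
  (\int[mu]_(x in `]0%R, 1%R[) (beta_kernel a x)%:E <= (2 / a + 2 / (1 - a))%:E)%E.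
Proof.
apply: ge0_integral_oo_le => //.
- exact: continuous_beta_kernel.
- by move=> x /beta_kernel_gt0/ltW.
move=> al be al0 albe be1.
apply: le_trans (integral_beta_majorant_le al0 albe be1).
apply: ge0_le_integral => //.
- move=> x /= /[!in_itv] /= /andP[? ?].
  by rewrite lee_fin ltW // beta_kernel_gt0 //; apply/andP; split; lra.
- exact: continuous_oo_measurable_fun_cc (@continuous_beta_kernel R a) _ _.
- exact: continuous_oo_measurable_fun_cc continuous_beta_majorant _ _.
- move=> x /= /[!in_itv] /= /andP[? ?].
  by rewrite lee_fin beta_kernel_le_majorant //; apply/andP; split; lra.
Qed.

End beta_kernel_integrable.

Section change_of_variables.
Variables (R : realType) (a k r : R).
Hypothesis r01 : 0 < r <= 1.
Local Notation mu := (@lebesgue_measure R).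
Local Notation f := (beta_kernel a).

Lemma integral_cc_phi_le (al be : R) : 0 < al -> al < be -> be * (1 + r) < 2 * r ->
  (\int[mu]_(x in `[al, be]) (f (phi r x) * dphi r x)%:E
     <= \int[mu]_(x in `]0%R, 1%R[) (f x)%:E)%E.
Proof.
move=> al0 albe ber; have /andP[r0 r1] := r01.
have /andP[phial0 _] : 0 < phi r al < 1 by apply: phi_itv => //; nra.
have /andP[_ phibe1] : 0 < phi r be < 1 by apply: phi_itv => //; lra.
have hom : {in `[al, be] &, {homo phi r : x y / x < y}}.
  by move=> x y /[!in_itv] /= /andP[? _] _; apply: phi_increasing; lra.
have cF' : {in `]al, be[, continuous ((phi r)^`())%classic}.
  by move=> x /[!in_itv] /= /andP[? _]; apply: continuous_derive1_phi; lra.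
have cva : cvg (((phi r)^`())%classic x @[x --> al^'+]).
  by apply/cvg_ex; eexists; apply/cvg_at_right_filter/continuous_derive1_phi.
have cvb : cvg (((phi r)^`())%classic x @[x --> be^'-]).
  by apply/cvg_ex; eexists; apply/cvg_at_left_filter/continuous_derive1_phi; lra.
have dphi_at (x : R) : 0 < x -> is_derive x 1 (phi r) (dphi r x).
  by move=> x0; apply/is_derive_phi/phi_denom_gt0.
have dLR : derivable_oo_LRcontinuous (phi r) al be.
  split.
  - by move=> x /[!in_itv] /= /andP[? _]; case: (dphi_at x) => //; lra.
  - exact/cvg_at_right_filter/is_derive1_continuous/dphi_at.
  - by apply/cvg_at_left_filter/is_derive1_continuous/dphi_at; lra.
have cG : {within `[phi r al, phi r be], continuous f}.
  apply: continuous_in_subspaceT => x /[!inE] /= /[!in_itv] /= /andP[? ?].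
  by apply: continuous_beta_kernel; rewrite in_itv /=; apply/andP; split; lra.
rewrite (_ : \int[mu]_(x in `[al, be]) _ =
    \int[mu]_(x in `[al, be]) (((f \o phi r) * ((phi r)^`())%classic) x)%:E)%E; last first.
  apply: eq_integral => x /[!inE] /= /[!in_itv] /= /andP[? _].
  by rewrite -derive1_phi ?phi_denom_gt0 //; lra.
rewrite -(integration_by_substitution_increasing (ltW albe) hom cF' cva cvb dLR cG).
apply: ge0_subset_integral => //.
- by apply/measurable_EFinP; exact: continuous_oo_measurable_fun (@continuous_beta_kernel R a).
- by move=> x /= /[!in_itv] /= ?; rewrite lee_fin ltW // beta_kernel_gt0.
- by move=> x /= /[!in_itv] /= /andP[? ?]; apply/andP; split; lra.
Qed.

Hypothesis q_ge0 :
  forall w : R, 0 < w < 1 -> 0 <= (k + a) + (a - 1) * w + (1 - k) * w ^+ 2.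

Lemma integral_cc_scaled_le (al be : R) : 0 < al -> al < be -> be * (1 + r) < 2 * r ->
  (\int[mu]_(x in `[al, be]) (r `^ k * f x)%:E
     <= \int[mu]_(x in `]0%R, 1%R[) (f x)%:E)%E.
Proof.
move=> al0 albe ber; have /andP[r0 r1] := r01.
apply: le_trans (integral_cc_phi_le al0 albe ber).
have berX : be < 2 * r / (1 + r) by rewrite ltr_pdivlMr //; lra.
apply: ge0_le_integral => //.
- move=> x /= /[!in_itv] /= /andP[? ?].
  by rewrite lee_fin mulr_ge0 ?powR_ge0 // ltW // beta_kernel_gt0 //; apply/andP; split; nra.
- apply: (@continuous_oo_measurable_fun_cc _ _ 0 1) => //; last by nra.
  move=> x x01.
  exact: continuousM (cvg_cst _) (@continuous_beta_kernel R a x x01).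
- apply: (@continuous_oo_measurable_fun_cc _ _ 0 (2 * r / (1 + r))) => //.
  move=> x /[!in_itv] /= /andP[x0 xX].
  have xr : x * (1 + r) < 2 * r by rewrite -ltr_pdivlMr //; lra.
  have D0 := phi_denom_gt0 r01 x0.
  have cfphi : {for x, continuous (f \o phi r)}.
    apply: continuous_comp; first exact: is_derive1_continuous (is_derive_phi D0).
    by apply: continuous_beta_kernel; rewrite in_itv /=; apply: phi_itv.
  exact: continuousM cfphi (continuous_dphi D0).
- move=> x /= /[!in_itv] /= /andP[? ?].
  by rewrite lee_fin beta_kernel_le_phi //; nra.
Qed.

Hypothesis a01 : 0 < a < 1.

Lemma scaled_integral_le :
  r `^ k * fine (\int[mu]_(x in `]0%R, (2 * r / (1 + r))%R[) (f x)%:E)%E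
  - fine (\int[mu]_(x in `]0%R, 1%R[) (f x)%:E)%E <= 0.
Proof.
have /andP[r0 r1] := r01.
set X := 2 * r / (1 + r).
have X1 : X <= 1 by rewrite ler_pdivrMr; lra.
have f_ge0 (x : R) : 0 < x < 1 -> (0 <= (f x)%:E)%E.
  by move=> /beta_kernel_gt0/ltW; rewrite lee_fin.
have f_ge0X (x : R) : 0 < x < X -> (0 <= (f x)%:E)%E.
  by move=> /andP[? ?]; apply: f_ge0; apply/andP; split; lra.
have mf : measurable_fun (`]0%R, 1%R[%classic : set R) (EFin \o f).
  by apply/measurable_EFinP; exact: continuous_oo_measurable_fun (@continuous_beta_kernel R a).
have subX : (`]0, X[%classic : set R) `<=` `]0%R, 1%R[%classic.
  by move=> x /= /[!in_itv] /= /andP[? ?]; apply/andP; split; lra.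
set E1 := (\int[mu]_(x in `]0%R, 1%R[) (f x)%:E)%E.
set EX := (\int[mu]_(x in `]0%R, X[) (f x)%:E)%E.
have E10 : (0 <= E1)%E by apply: integral_ge0 => x /= /[!in_itv] /=; exact: f_ge0.
have E1fin : E1 \is a fin_num.
  by rewrite ge0_fin_numE // (le_lt_trans (integral_beta_kernel_le a01)) ?ltry.
have EX0 : (0 <= EX)%E by apply: integral_ge0 => x /= /[!in_itv] /=; exact: f_ge0X.
have EXfin : EX \is a fin_num.
  rewrite ge0_fin_numE // (@le_lt_trans _ _ E1) -?ge0_fin_numE //.
  by apply: ge0_subset_integral => // x /= /[!in_itv] /=; exact: f_ge0.
have scaled : (\int[mu]_(x in `]0%R, X[) ((r `^ k)%:E * (f x)%:E) <= E1)%E.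
  under eq_integral do rewrite -EFinM.
  apply: ge0_integral_oo_le => //; first by rewrite divr_gt0 //; lra.
  - move=> x /[!in_itv] /= /andP[? ?].
    have x01 : x \in `]0, 1[ by rewrite in_itv /=; apply/andP; split; lra.
    exact: continuousM (cvg_cst _) (@continuous_beta_kernel R a x x01).
  - move=> x /andP[? ?]; rewrite mulr_ge0 ?powR_ge0 // ltW // beta_kernel_gt0 //.
    by apply/andP; split; lra.
  - move=> al be al0 albe beX; apply: integral_cc_scaled_le => //.
    by rewrite -ltr_pdivlMr //; lra.
rewrite ge0_integralZl_EFin ?powR_ge0 // in scaled; last first.
  exact: measurable_funS mf.
rewrite subr_le0 -lee_fin EFinM !fineK //.
Qed.

End change_of_variables.

Unset Implicit Arguments.
Local Close Scope classical_set_scope.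

Theorem lemma2p3 (R : realType) (p alpha : R) :
  alpha + 2 < p -> 0 < alpha + 2 ->
  0 <= 6 * p ^+ 2 - 11 * p + 4 ->
  p != 3^-1 ->
  (6 * p ^+ 3 - 29 * p ^+ 2 + 17 * p - 2
     - 2 * p * Num.sqrt (6 * p ^+ 2 - 11 * p + 4)) / (3 * p - 1) ^+ 2 <= alpha ->
  alpha <= (6 * p ^+ 3 - 29 * p ^+ 2 + 17 * p - 2
     + 2 * p * Num.sqrt (6 * p ^+ 2 - 11 * p + 4)) / (3 * p - 1) ^+ 2 ->
  forall r : R, 0 < r <= 1 -> F p alpha r <= 0.
Proof.
move=> alpha_lt_p alpha_gt D_ge0 p_neq hlo hhi r r01.
have p0 : 0 < p := lt_trans alpha_gt alpha_lt_p.
set a := (alpha + 2) / p; set k := p - 4 - 3 * alpha / 2.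
have a0 : 0 < a by rewrite divr_gt0.
have a1 : a < 1 by rewrite ltr_pdivrMr // mul1r.
have disc : (a - 1) ^+ 2 <= 4 * (1 - k) * (k + a).
  exact: alpha_bounds_discriminant p0 p_neq D_ge0 hlo hhi.
have k1 : 0 < 1 - k by apply: discriminant_lead_gt0 a0 _ disc; rewrite lt_eqF.
have q_ge0 (w : R) : 0 < w < 1 -> 0 <= (k + a) + (a - 1) * w + (1 - k) * w ^+ 2.
  by move=> _; exact: quadratic_ge0.
(* [F] unfolds to the left-hand side of [scaled_integral_le], the integrand of [Iint]
   being [beta_kernel a]. *)
exact: (scaled_integral_le r01 q_ge0 (introT andP (conj a0 a1))).
Qed.
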